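(* Let $\{e_n\}_{n\in\mathbb{Z}}$ be a sequence of i.i.d. real random variables, and let $q,d\ge 1$ be integers, $r\in\mathbb{R}$, and $\mu_1,\mu_2,\phi_1,\dots,\phi_q,\psi_1,\dots,\psi_q\in\mathbb{R}$. Define $$a_n=\mu_2+e_n+\sum_{i=1}^q\psi_ie_{n-i},\qquad b_n=\mu_1+e_n+\sum_{i=1}^q\phi_ie_{n-i},$$ $$U_n=\mathbb{1}(a_n\le r),\qquad W_n=\mathbb{1}(b_n\le r)-\mathbb{1}(a_n\le r).$$ Assume $\mathbb{P}(a_n\le r,\ b_n\le r)+\mathbb{P}(a_n>r,\ b_n>r)\neq 0$. Then the series $$\alpha_{n-d}=\sum_{j=1}^{\infty}\Big[\Big(\prod_{s=1}^{j-1}W_{n-sd}\Big)U_{n-jd}\Big]$$ (with the empty product equal to $1$) converges in $L^1$ and almost surely for every $n\in\mathbb{Z}$, and the TMA$(q)$ equation $$y_n=\begin{cases}\mu_1+e_n+\sum_{i=1}^q\phi_ie_{n-i}, & \text{if } y_{n-d}\le r,\\ \mu_2+e_n+\sum_{i=1}^q\psi_ie_{n-i}, & \text{if } y_{n-d}>r,\end{cases}\qquad n\in\mathbb{Z},$$ has a strictly stationary and ergodic solution given by $$y_n=\mu_2+e_n+\sum_{i=1}^q\psi_ie_{n-i}+\Big[(\mu_1-\mu_2)+\sum_{i=1}^q(\phi_i-\psi_i)e_{n-i}\Big]\alpha_{n-d}\quad\text{a.s.}$$ Moreover this solution is unique: any process $\{\tilde y_n\}_{n\in\mathbb{Z}}$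 on the same probability space satisfying the TMA$(q)$ equation almost surely for all $n$ coincides with it almost surely for every $n$.
   Context: $\mathbb{1}(\cdot)$ denotes the indicator function. A solution of the TMA$(q)$ equation means a real-valued process $\{y_n\}_{n\in\mathbb{Z}}$ defined on the same probability space as $\{e_n\}$ such that the displayed equation holds almost surely for every $n\in\mathbb{Z}$. *)

From HB Require Import structures.
From mathcomp Require Import all_boot all_order all_algebra.
From mathcomp Require Import all_classical all_reals all_analysis.
Set Implicit Arguments. Unset Strict Implicit. Unset Printing Implicit Defensive.
Import Order.TTheory GRing.Theory Num.Theory.
Import numFieldNormedType.Exports.
Local Open Scope classical_set_scope.
Local Open Scope ring_scope.

Section TMA.
Context {dT : measure_display} {T : measurableType dT} {R : realType}.
Variable P : probability T R.

Definition mutually_independent (X : int -> T -> R) : Prop :=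
  forall (s : seq int) (B : int -> set R), uniq s ->
    (forall i, measurable (B i)) ->
    P (\bigcap_(i in [set` s]) (X i @^-1` B i)) =
    (\prod_(i <- s) P (X i @^-1` B i))%E.

Definition identically_distributed (X : int -> T -> R) : Prop :=
  forall (i : int) (B : set R), measurable B ->
    P (X i @^-1` B) = P (X 0 @^-1` B).

Definition iid (X : int -> T -> R) : Prop :=
  (forall i, measurable_fun setT (X i)) /\
  mutually_independent X /\ identically_distributed X.

Definition cylinders : set (set (int -> R)) :=
  [set A | exists (i : int) (B : set R), measurable B /\
           A = (fun f : int -> R => f i) @^-1` B].

Definition path_measurable (A : set (int -> R)) : Prop := <<s cylinders >> A.

Definition shift (f : int -> R) : int -> R := fun n => f (n + 1).

Definition path (y : int -> T -> R) : T -> (int -> R) := fun w n => y n w.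

Definition strictly_stationary (y : int -> T -> R) : Prop :=
  forall A, path_measurable A ->
    P (path y @^-1` (shift @^-1` A)) = P (path y @^-1` A).

Definition ergodic (y : int -> T -> R) : Prop :=
  forall A, path_measurable A -> shift @^-1` A = A ->
    P (path y @^-1` A) = 0%E \/ P (path y @^-1` A) = 1%E.

(** The model ingredients. phi, psi are used at indices 1..q. *)
Definition ma_part (mu : R) (coef : nat -> R) (q : nat) (e : int -> T -> R)
  (n : int) : T -> R :=
  fun w => mu + e n w + \sum_(1 <= i < q.+1) coef i * e (n - i%:Z) w.

Definition indic (b : bool) : R := if b then 1 else 0.

Definition alpha_partial (a b : int -> T -> R) (r : R) (d : nat)
  (n : int) (N : nat) : T -> R :=
  fun w => \sum_(1 <= j < N.+1)
    (\prod_(1 <= s < j)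
        (indic (b (n - (s * d)%:Z) w <= r) - indic (a (n - (s * d)%:Z) w <= r)))
    * indic (a (n - (j * d)%:Z) w <= r).

Definition TMA_solution (a b : int -> T -> R) (r : R) (d : nat)
  (y : int -> T -> R) : Prop :=
  forall n : int, {ae P, forall w,
    y n w = (if y (n - d%:Z) w <= r then b n w else a n w)}.

End TMA.

From Pilot Require Import Defs.
From HB Require Import structures.
From mathcomp Require Import all_boot all_order all_algebra.
From mathcomp Require Import all_classical all_reals all_analysis.
From mathcomp Require Import lra zify measurable_realfun.

(* W takes values in {-1, 0, 1} and U in {0, 1}; as
   soon as some W_{n-sd} vanishes the series alpha_{n-d} is a finite sum, takes
   values in {0, 1} and satisfies alpha_n = U_{n-d} + W_{n-d} alpha_{n-d}, which
   is exactly the threshold equation for y = a + (b - a) alpha.  For any other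
   solution, 1(y_{n-d} <= r) obeys the same recursion, hence equals alpha_{n-d}.
   For i.i.d. noise the events {W_{n-j(q+1)d} <> 0} are independent with a
   common probability p < 1, so almost surely some W vanishes.
   The solution is a fixed measurable function of the noise path commuting with
   the shift, so it inherits stationarity and ergodicity from the noise; the
   latter is the mixing argument: an invariant event A is close to an event C
   depending on finitely many coordinates, C is independent of a far translate
   of itself, and this forces P(A) = P(A)^2. *)

Set Implicit Arguments. Unset Strict Implicit. Unset Printing Implicit Defensive.
Import Order.TTheory GRing.Theory Num.Theory.
Import numFieldNormedType.Exports.
Local Open Scope classical_set_scope.
Local Open Scope ring_scope.

Section path_space.
Context {R : realType}.
Implicit Types (I J : set int) (s : seq int) (B : int -> set R).

Definition box s B : set (int -> R) := [set f | forall i, i \in s -> B i (f i)].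

Definition boxes_on I : set (set (int -> R)) :=
  [set A | exists s B, [/\ uniq s, (forall i, i \in s -> I i),
     (forall i, measurable (B i)) & A = box s B]].

Definition events_on I := <<s boxes_on I >>.

Definition paths_on I := g_sigma_algebraType (boxes_on I).

Lemma box_nil B : box [::] B = setT.
Proof. by apply/seteqP; split => f //= _ i. Qed.

Lemma box_cons i s B :
  box (i :: s) B = (fun f : int -> R => f i) @^-1` B i `&` box s B.
Proof.
apply/seteqP; split => f /=.
- by move=> h; split => [|j js]; apply: h; rewrite inE ?eqxx ?js ?orbT.
- by move=> [h1 h2] j; rewrite inE => /orP[/eqP ->//|]; exact: h2.
Qed.

Lemma box1 i (A : set R) : box [:: i] (fun _ => A) = (fun f : int -> R => f i) @^-1` A.
Proof. by rewrite box_cons box_nil setIT. Qed.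

Lemma boxI s1 s2 B1 B2 : box s1 B1 `&` box s2 B2 =
  box (undup (s1 ++ s2)) (fun i => (if i \in s1 then B1 i else setT) `&`
                                 (if i \in s2 then B2 i else setT)).
Proof.
apply/seteqP; split => f.
- move=> [h1 h2] i; rewrite mem_undup mem_cat => _.
  by split; case: ifP => // H; [exact: h1|exact: h2].
- by move=> h; split => i Hi; have := h i;
    rewrite mem_undup mem_cat Hi ?orbT => /(_ isT) [].
Qed.

Lemma boxes_on_setI_closed I : setI_closed (boxes_on I).
Proof.
move=> _ _ [s1 [B1 [_ I1 m1 ->]]] [s2 [B2 [_ I2 m2 ->]]].
rewrite boxI; do 2 eexists; split; last reflexivity; first exact: undup_uniq.
- by move=> i; rewrite mem_undup mem_cat => /orP[]; [exact: I1|exact: I2].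
- by move=> i; apply: measurableI; case: ifP.
Qed.

Lemma boxes_onT I : boxes_on I setT.
Proof. by exists [::], (fun=> setT); rewrite box_nil. Qed.

Lemma events_on_sub I J : I `<=` J -> events_on I `<=` events_on J.
Proof.
move=> IJ; apply: sub_sigma_algebra2 => A [s [B [u sI mB ->]]].
by exists s, B; split=> // i /sI; exact: IJ.
Qed.

Lemma path_measurableE : path_measurable = events_on setT :> (set (set (int -> R))).
Proof.
apply/funext => A; apply/propext; split.
- apply: sub_sigma_algebra2 => _ [i [B [mB ->]]].
  by exists [:: i], (fun _ => B); split => //; rewrite box1.
- apply: smallest_sub; first exact: smallest_sigma_algebra.
  move=> _ [s [B [_ _ mB ->]]]; elim: s => [|i s ih].
    by rewrite box_nil; exact: (@measurableT _ (g_sigma_algebraType cylinders)).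
  rewrite box_cons; apply: (@measurableI _ (g_sigma_algebraType cylinders)) => //.
  by apply: sub_sigma_algebra; exists i, (B i).
Qed.

Lemma events_on_path_measurable I A : events_on I A -> path_measurable A.
Proof. by rewrite path_measurableE; apply: events_on_sub. Qed.

Lemma measurable_coord I i : I i -> measurable_fun setT (fun f : paths_on I => f i).
Proof.
move=> Ii _ B mB; rewrite setTI; apply: sub_sigma_algebra.
by exists [:: i], (fun _ => B); rewrite box1; split => // j; rewrite inE => /eqP ->.
Qed.

Lemma measurable_to_paths_on d (U : measurableType d) I (g : U -> paths_on I) :
  (forall i, I i -> measurable_fun setT (fun u => g u i)) -> measurable_fun setT g.
Proof.
move=> mg; apply: (@measurability _ _ U (paths_on I) setT g (boxes_on I)) => //.
move=> _ [_ [s [B [_ sI mB ->]]] <-]; rewrite setTI.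
elim: s sI => [|i s ih] sI; first by rewrite box_nil preimage_setT.
rewrite box_cons preimage_setI; apply: measurableI.
- by rewrite -[X in measurable X]setTI; apply: mg => //; apply: sI; rewrite mem_head.
- by apply: ih => j js; apply: sI; rewrite inE js orbT.
Qed.

Lemma measure_unique_boxes I (m1 m2 : {measure set (paths_on I) -> \bar R}) :
  (m1 setT < +oo)%E -> (forall A, boxes_on I A -> m1 A = m2 A) ->
  forall A, events_on I A -> m1 A = m2 A.
Proof.
move=> m1T m12 A hA.
apply: (@measure_unique _ _ (paths_on I) (boxes_on I) (fun=> setT)) => //.
- exact: boxes_on_setI_closed.
- by move=> _; exact: boxes_onT.
- by rewrite bigcup_const.
Qed.

Definition shiftn (k : int) (f : int -> R) : int -> R :=
  fun n => f (n + k).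

Lemma box_shiftn k s B :
  shiftn k @^-1` box s B = box (map (fun i => i + k) s) (fun j => B (j - k)).
Proof.
apply/seteqP; split => f /=.
- by move=> h j /mapP [i Hi ->]; rewrite addrK; exact: h.
- by move=> h i Hi; have := h (i + k) (map_f _ Hi); rewrite addrK.
Qed.

Lemma events_on_shiftn I k (A : set (int -> R)) :
  events_on I A -> events_on (fun j => I (j - k)) (shiftn k @^-1` A).
Proof.
move=> hA; have : measurable_fun setT (shiftn k : paths_on (fun j => I (j - k)) -> paths_on I).
  by apply: measurable_to_paths_on => i Ii; apply: measurable_coord; rewrite addrK.
by move=> /(_ measurableT A hA); rewrite setTI.
Qed.

Lemma shiftn_invariant A : Defs.shift @^-1` A = A ->
  forall k : nat, shiftn k%:Z @^-1` A = A.
Proof.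
move=> hA; elim=> [|k ih].
  by apply/seteqP; split => f /=; rewrite (_ : shiftn 0 f = f) // /shiftn;
    apply/funext => n; rewrite addr0.
rewrite -[in RHS]hA -[in RHS]ih; apply/seteqP; split => f /=;
  rewrite (_ : shiftn k.+1%:Z f = shiftn k%:Z (Defs.shift f)) //;
  by apply/funext => n; rewrite /shiftn /Defs.shift -addrA -PoszD addn1.
Qed.
End path_space.

Section iid_law.
Context {dT : measure_display} {T : measurableType dT} {R : realType}.
Variables (P : probability T R) (e : int -> T -> R).
Hypothesis e_iid : iid P e.
Local Notation X := (Defs.path e).

Lemma measurable_path I : measurable_fun setT (X : T -> paths_on I).
Proof. by apply: measurable_to_paths_on => i _; case: e_iid => me _; exact: me. Qed.

Lemma measurable_comp_path I (g : paths_on I -> R) :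
  measurable_fun setT g -> measurable_fun setT (fun w => g (X w)).
Proof. by move=> mg; have := measurableT_comp mg (measurable_path (I := I)); exact. Qed.

Lemma measurable_path_preimage I A : events_on I A -> measurable (X @^-1` A).
Proof. by move=> hA; have := measurable_path measurableT hA; rewrite setTI. Qed.

Lemma path_measurable_preimage A : path_measurable A -> measurable (X @^-1` A).
Proof. by rewrite path_measurableE; exact: measurable_path_preimage. Qed.

Lemma prob_box s B : uniq s -> (forall i, measurable (B i)) ->
  P (X @^-1` box s B) = (\prod_(i <- s) P (e i @^-1` B i))%E.
Proof. by move=> u mB; case: e_iid => _ [indep _]; rewrite -indep. Qed.

Lemma prob_box_disjoint s1 B1 s2 B2 : uniq s1 -> uniq s2 ->
  (forall i, i \in s1 -> i \notin s2) ->
  (forall i, measurable (B1 i)) -> (forall i, measurable (B2 i)) ->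
  P (X @^-1` (box s1 B1 `&` box s2 B2)) = (P (X @^-1` box s1 B1) * P (X @^-1` box s2 B2))%E.
Proof.
move=> u1 u2 s12 m1 m2.
have n1 i : i \in s2 -> i \notin s1 by move=> i2; apply/negP => /s12; rewrite i2.
have -> : box s1 B1 `&` box s2 B2 =
    box (s1 ++ s2) (fun i => if i \in s1 then B1 i else B2 i).
  apply/seteqP; split => f.
  - move=> [h1 h2] i; case: ifPn => [/h1//|i1]; rewrite mem_cat (negbTE i1); exact: h2.
  - move=> h; split => i Hi; have := h i; rewrite mem_cat Hi ?orbT => /(_ isT) //.
    by rewrite (negbTE (n1 _ Hi)).
rewrite !prob_box //; last by move=> i; case: ifP.
- rewrite big_cat /=; congr (_ * _)%E; apply: eq_big_seq => i Hi.
  + by rewrite Hi.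
  + by rewrite (negbTE (n1 _ Hi)).
- rewrite cat_uniq u1 u2 andbT; apply/hasPn => i /n1; exact.
Qed.

(* Both sides are finite measures in [A], so agreement on boxes propagates. *)
Lemma prob_indep_boxes I (Y : set T) : measurable Y ->
  (forall A, boxes_on I A -> P (X @^-1` A `&` Y) = (P (X @^-1` A) * P Y)%E) ->
  forall A, events_on I A -> P (X @^-1` A `&` Y) = (P (X @^-1` A) * P Y)%E.
Proof.
move=> mY hbox A hA; pose c := NngNum (fine_ge0 (measure_ge0 P Y)).
have PY : P Y = (c%:num)%:E by rewrite fineK // fin_num_measure.
rewrite PY muleC.
apply: (measure_unique_boxes (m1 := pushforward (mrestr P mY) (X : T -> paths_on I))
                             (m2 := mscale c (pushforward P (X : T -> paths_on I)))) => //.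
- exact: measurable_path.
- exact: measurable_path.
- move=> ?; apply: (le_lt_trans (probability_le1 P _)) (ltry _).
  exact: measurableI (measurable_path_preimage (@measurableT _ (paths_on I))) mY.
- move=> ? ? B hB; change (P (X @^-1` B `&` Y) = (c%:num%:E * P (X @^-1` B))%E).
  by rewrite hbox // PY muleC.
Qed.

Lemma prob_indep I J A B : (forall i, I i -> ~ J i) -> events_on I A -> events_on J B ->
  P (X @^-1` (A `&` B)) = (P (X @^-1` A) * P (X @^-1` B))%E.
Proof.
move=> IJ hA hB.
have boxes A' B' : boxes_on I A' -> boxes_on J B' ->
    P (X @^-1` B' `&` X @^-1` A') = (P (X @^-1` B') * P (X @^-1` A'))%E.
  move=> [s1 [B1 [u1 I1 m1 ->]]] [s2 [B2 [u2 J2 m2 ->]]].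
  rewrite -preimage_setI setIC prob_box_disjoint 1?muleC // => i /I1 Ii.
  by apply/negP => /J2; exact: IJ.
have box_event A' : boxes_on I A' ->
    P (X @^-1` A' `&` X @^-1` B) = (P (X @^-1` A') * P (X @^-1` B))%E.
  move=> hA'; rewrite setIC muleC.
  apply: (prob_indep_boxes (measurable_path_preimage (sub_sigma_algebra hA')) _ hB).
  by move=> B' hB'; exact: boxes.
rewrite preimage_setI.
exact: (prob_indep_boxes (measurable_path_preimage hB) box_event hA).
Qed.

Lemma prob_shiftn k A : path_measurable A ->
  P (X @^-1` (shiftn k @^-1` A)) = P (X @^-1` A).
Proof.
rewrite path_measurableE => hA.
have mXk : measurable_fun setT (shiftn k \o X : T -> paths_on setT).
  by apply: measurable_to_paths_on => i _; case: e_iid => me _; exact: me.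
apply: (measure_unique_boxes (m1 := pushforward P (shiftn k \o X : T -> paths_on setT))
                             (m2 := pushforward P (X : T -> paths_on setT))) => //.
- exact: measurable_path.
- rewrite /pushforward; apply: (le_lt_trans (probability_le1 P _)) (ltry _).
  by rewrite -[X in measurable X]setTI; exact: mXk.
- move=> ? _ [s [B [u _ mB ->]]].
  change (P (X @^-1` (shiftn k @^-1` box s B)) = P (X @^-1` box s B)).
  rewrite box_shiftn !prob_box // ?big_map; last by rewrite map_inj_uniq //; exact: addIr.
  apply: eq_bigr => i _; rewrite addrK; case: e_iid => _ [_ id].
  by rewrite id // [RHS]id.
Qed.
End iid_law.

Section shift_ergodic.
Context {dT : measure_display} {T : measurableType dT} {R : realType}.
Variables (P : probability T R) (e : int -> T -> R).
Hypothesis e_iid : iid P e.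
Local Notation X := (Defs.path e).
Local Notation PM := (g_sigma_algebraType (@cylinders R)).

Let mX A : path_measurable A -> measurable (X @^-1` A) :=
  path_measurable_preimage e_iid (A := A).

Let pr (A : set (int -> R)) : R := fine (P (X @^-1` A)).

Let prE A : path_measurable A -> P (X @^-1` A) = (pr A)%:E.
Proof. by move=> hA; rewrite fineK // fin_num_measure //; exact: mX. Qed.

Let pr_ge0 A : 0 <= pr A.
Proof. exact/fine_ge0/measure_ge0. Qed.

Let pr_le1 A : path_measurable A -> pr A <= 1.
Proof.
by move=> hA; rewrite -lee_fin -prE // probability_le1 //; exact: mX.
Qed.

Let pr_set0 : pr set0 = 0.
Proof. by rewrite /pr preimage_set0 measure0. Qed.

Let pr_le A B : path_measurable A -> path_measurable B -> A `<=` B -> pr A <= pr B.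
Proof.
move=> hA hB AB; rewrite -lee_fin -!prE //.
by apply: le_measure; rewrite ?inE; [exact: mX|exact: mX|move=> w; exact: AB].
Qed.

Let pr_subU A B C : path_measurable A -> path_measurable B -> path_measurable C ->
  A `<=` B `|` C -> pr A <= pr B + pr C.
Proof.
move=> hA hB hC ABC.
have hBC : path_measurable (B `|` C) by exact: (@measurableU _ PM).
apply: (le_trans (pr_le hA hBC ABC)).
rewrite -lee_fin EFinD -!prE // preimage_setU.
by apply: measureU2; exact: mX.
Qed.

Let pr_setD A B : path_measurable A -> path_measurable B -> B `<=` A ->
  pr (A `\` B) = pr A - pr B.
Proof.
move=> hA hB BA; apply/eqP; rewrite -eqe EFinB -!prE //; last exact: (@measurableD _ PM).
rewrite (_ : X @^-1` (A `\` B) = X @^-1` A `\` X @^-1` B) //.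
rewrite measureD; [|exact: mX|exact: mX|].
  by rewrite -preimage_setI setIidr.
by rewrite (le_lt_trans (probability_le1 _ _)) ?ltry //; exact: mX.
Qed.

Let path_measurableY (A B : set (int -> R)) : path_measurable A -> path_measurable B ->
  path_measurable (A `+` B).
Proof. by move=> hA hB; apply: (@measurableU _ PM); exact: (@measurableD _ PM). Qed.

Definition window (N : nat) : set int := [set j | (`|j| <= N)%N].

Let approximable (A : set (int -> R)) : Prop := path_measurable A /\ forall eps, 0 < eps ->
  exists N C, events_on (window N) C /\ pr (A `+` C) <= eps.

Let approximable_box A : boxes_on setT A -> approximable A.
Proof.
move=> hA; split.
  by apply: (@events_on_path_measurable _ setT); exact: sub_sigma_algebra.
case: hA => [s [B [u _ mB ->]]] eps eps0.
exists (\max_(i <- s) `|i|%N), (box s B); rewrite setYK pr_set0 (ltW eps0).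
split => //; apply: sub_sigma_algebra; exists s, B; split => // i Hi.
exact: leq_bigmax_seq.
Qed.

Let approximableD A B : B `<=` A -> approximable A -> approximable B ->
  approximable (A `\` B).
Proof.
move=> BA [hA apA] [hB apB]; split; first exact: (@measurableD _ PM).
move=> eps eps0; have eps2 : 0 < eps / 2 by rewrite divr_gt0.
have [NA [CA [hCA prCA]]] := apA _ eps2; have [NB [CB [hCB prCB]]] := apB _ eps2.
exists (maxn NA NB), (CA `\` CB); split.
  apply: (@measurableD _ (paths_on (window (maxn NA NB)))).
  - by apply: events_on_sub hCA => j /= /leq_trans; apply; exact: leq_maxl.
  - by apply: events_on_sub hCB => j /= /leq_trans; apply; exact: leq_maxr.
have pCA := events_on_path_measurable hCA; have pCB := events_on_path_measurable hCB.
apply: le_trans (_ : pr (A `+` CA) + pr (B `+` CB) <= eps); last first.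
  by rewrite (splitr eps) lerD.
apply: pr_subU; [|exact: path_measurableY|exact: path_measurableY|].
  by apply: path_measurableY; exact: (@measurableD _ PM).
move=> x /=; case: (pselect (A x)); case: (pselect (B x));
  case: (pselect (CA x)); case: (pselect (CB x)); tauto.
Qed.

Let approximable_bigcup (F : (set (int -> R))^nat) : nondecreasing_seq F ->
  (forall n, approximable (F n)) -> approximable (\bigcup_n F n).
Proof.
move=> ndF apF; have pF n : path_measurable (F n) by case: (apF n).
have pU : path_measurable (\bigcup_n F n) by exact: (@bigcupT_measurable _ PM).
split => // eps eps0; have eps2 : 0 < eps / 2 by rewrite divr_gt0.
have cvgF : (fun n => pr (F n)) @ \oo --> pr (\bigcup_n F n).
  apply: fine_cvg; rewrite -prE // preimage_bigcup.
  apply: nondecreasing_cvg_mu; [move=> n; exact: mX|rewrite -preimage_bigcup; exact: mX|].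
  by move=> n m nm; apply/subsetPset => w; have /subsetPset := ndF n m nm; apply.
have /cvgrPdist_le /(_ _ eps2) [N _ /(_ N (leqnn N)) /= FN] := cvgF.
have [NC [C [hC prC]]] := (apF N).2 _ eps2.
exists NC, C; split => //; have pC := events_on_path_measurable hC.
have FU : F N `<=` \bigcup_n F n by move=> x FNx; exists N.
apply: le_trans (_ : pr (\bigcup_n F n `\` F N) + pr (F N `+` C) <= eps).
  apply: pr_subU; [exact: path_measurableY pU pC|exact: (@measurableD _ PM _ _ pU (pF N))|
                   exact: path_measurableY (pF N) pC|].
  move=> x /=; move: (FU x); case: (pselect ((\bigcup_n F n) x));
    case: (pselect (F N x)); case: (pselect (C x)); tauto.
rewrite pr_setD // (splitr eps) lerD //.
by move: FN; rewrite ger0_norm // subr_ge0; exact: pr_le.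
Qed.

Lemma path_measurable_approx A : path_measurable A -> forall eps, 0 < eps ->
  exists N C, events_on (window N) C /\ pr (A `+` C) <= eps.
Proof.
rewrite path_measurableE => hA.
suff : <<s setT, boxes_on setT >> `<=` approximable by move=> /(_ _ hA) [].
apply: lambda_system_subset; [exact: boxes_on_setI_closed| |exact: approximable_box|by []].
split; [by []|exact: approximable_box (boxes_onT _)|exact: approximableD|].
exact: approximable_bigcup.
Qed.

Let mixing_bound A : path_measurable A -> Defs.shift @^-1` A = A ->
  forall eps, 0 < eps -> pr A * (1 - pr A) <= 4 * eps.
Proof.
move=> hA shA eps eps0; have [N [C [hC prAC]]] := path_measurable_approx hA eps0.
pose K := (2 * N).+1; pose C' := shiftn K%:Z @^-1` C.
have hC' : events_on (fun j => window N (j - K%:Z)) C' := events_on_shiftn hC.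
have pC := events_on_path_measurable hC; have pC' := events_on_path_measurable hC'.
have pCC' : path_measurable (C `&` C') := (@measurableI _ PM _ _ pC pC').
have disj i : window N i -> ~ window N (i - K%:Z) by rewrite /window /=; lia.
have prCC' : pr (C `&` C') = pr C * pr C'.
  apply/eqP; rewrite -eqe EFinM -!prE //; apply/eqP.
  exact: (prob_indep e_iid disj hC hC').
have prC' : pr C' = pr C by rewrite /pr /C' prob_shiftn.
have prAC' : pr (A `+` C') = pr (A `+` C).
  rewrite /pr -{1}(shiftn_invariant shA K).
  have -> : shiftn K%:Z @^-1` A `+` C' = shiftn K%:Z @^-1` (A `+` C) by [].
  by rewrite prob_shiftn //; exact: path_measurableY.
have pAC := path_measurableY hA pC; have pAC' := path_measurableY hA pC'.
have b1 : pr A <= pr C + pr (A `+` C).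
  by apply: pr_subU => // x Ax /=; case: (pselect (C x)); tauto.
have b2 : pr C <= pr A + pr (A `+` C).
  by apply: pr_subU => // x Cx /=; case: (pselect (A x)); tauto.
have b3 : pr (C `&` C') <= pr A + pr (A `+` C).
  by apply: pr_subU => // x [Cx _] /=; case: (pselect (A x)); tauto.
have pU : path_measurable ((A `+` C) `|` (A `+` C')) := @measurableU _ PM _ _ pAC pAC'.
have b4 : pr A <= pr (C `&` C') + pr ((A `+` C) `|` (A `+` C')).
  by apply: pr_subU => // x Ax /=; case: (pselect (C x)); case: (pselect (C' x)); tauto.
have b5 : pr ((A `+` C) `|` (A `+` C')) <= pr (A `+` C) + pr (A `+` C').
  exact: pr_subU.
rewrite prCC' prC' in b3 b4; rewrite prAC' in b5.
have := pr_ge0 C; have := pr_le1 pC; have := pr_ge0 A; have := pr_le1 hA; nra.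
Qed.

Lemma shift_invariant_prob01 A : path_measurable A -> Defs.shift @^-1` A = A ->
  P (X @^-1` A) = 0%E \/ P (X @^-1` A) = 1%E.
Proof.
move=> hA shA; rewrite prE //.
have a0 := pr_ge0 A; have a1 := pr_le1 hA.
suff /eqP : pr A * (1 - pr A) = 0.
  by rewrite mulf_eq0 subr_eq0 => /orP[]/eqP ->; [left|right].
apply/eqP; rewrite eq_le mulr_ge0 ?subr_ge0 // andbT leNgt; apply/negP => h.
have := mixing_bound hA shA (divr_gt0 h (ltr0n _ 8)); lra.
Qed.
End shift_ergodic.

Lemma measurable_indic_le d (U : measurableType d) (R : realType) (D : set U)
    (g : U -> R) (r : R) :
  measurable_fun D g -> measurable_fun D (fun x => @Defs.indic R (g x <= r)).
Proof.
move=> mg; apply: (measurableT_comp (f := fun b : bool => @Defs.indic R b)) => //.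
exact: measurable_fun_ler mg (measurable_cst _).
Qed.

Section tma_path.
Context {R : realType}.
Variables (q d : nat) (r mu1 mu2 : R) (phi psi : nat -> R).
Implicit Types (f : int -> R) (n m : int).

Definition ma_path (mu : R) (coef : nat -> R) f n : R :=
  mu + f n + \sum_(1 <= i < q.+1) coef i * f (n - i%:Z).
Definition a_path := ma_path mu2 psi.
Definition b_path := ma_path mu1 phi.
Definition U_path f m : R := Defs.indic (a_path f m <= r).
Definition W_path f m : R := Defs.indic (b_path f m <= r) - Defs.indic (a_path f m <= r).

Definition alpha_sum f n (N : nat) : R :=
  \sum_(1 <= j < N.+1) (\prod_(1 <= s < j) W_path f (n - (s * d)%:Z)) * U_path f (n - (j * d)%:Z).
Definition W_prod f n (N : nat) : R := \prod_(1 <= s < N.+1) W_path f (n - (s * d)%:Z).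
Definition alpha_path f n : R := limn_sup (alpha_sum f n).

Definition jump_path f n : R :=
  (mu1 - mu2) + \sum_(1 <= i < q.+1) (phi i - psi i) * f (n - i%:Z).
Definition tma_path f : int -> R := fun n => a_path f n + jump_path f n * alpha_path f n.

Definition alpha_stops f n := exists s, W_path f (n - (s.+1 * d)%:Z) = 0.

Lemma lag_succ n s : n - (s.+1 * d)%:Z = (n - d%:Z) - (s * d)%:Z.
Proof. by rewrite mulSn PoszD opprD addrA. Qed.

Lemma W_prod_rec f n N : W_prod f n N.+1 = W_path f (n - d%:Z) * W_prod f (n - d%:Z) N.
Proof.
rewrite /W_prod big_nat_recl // mul1n; congr (_ * _).
by apply: eq_bigr => s _; rewrite lag_succ.
Qed.

Lemma alpha_sum0 f n : alpha_sum f n 0 = 0.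
Proof. by rewrite /alpha_sum big_geq. Qed.

Lemma alpha_sum_rec f n N : alpha_sum f n N.+1 =
  U_path f (n - d%:Z) + W_path f (n - d%:Z) * alpha_sum f (n - d%:Z) N.
Proof.
rewrite /alpha_sum big_nat_recl // big_geq // mul1r mul1n; congr (_ + _).
rewrite big_distrr /=; apply: eq_big_nat => j /andP [j1 _].
rewrite big_nat_recl // mul1n mulrA lag_succ; congr (_ * _ * _).
by apply: eq_bigr => s _; rewrite lag_succ.
Qed.

Lemma alpha_sum01 f n N : alpha_sum f n N = 0 \/ alpha_sum f n N = 1.
Proof.
elim: N n => [|N ih] n; first by left; exact: alpha_sum0.
rewrite alpha_sum_rec /W_path /U_path /Defs.indic.
by case: (ih (n - d%:Z)) => ->; do 2 case: ifP => _; first [left; lra|right; lra].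
Qed.

Lemma W_prod_eq0 f n s N : (1 <= s <= N)%N -> W_path f (n - (s * d)%:Z) = 0 ->
  W_prod f n N = 0.
Proof.
move=> /andP [s1 sN] W0; rewrite /W_prod (big_cat_nat _ (n := s)) //=; last exact: ltnW.
by rewrite [X in _ * X]big_ltn ?ltnS //= W0 mul0r mulr0.
Qed.

Lemma alpha_sum_stable f n s N : (1 <= s <= N)%N -> W_path f (n - (s * d)%:Z) = 0 ->
  alpha_sum f n N = alpha_sum f n s.
Proof.
move=> /andP [s1 sN] W0; elim: N sN => [|N ih]; first by rewrite leqn0 => /eqP ->.
rewrite leq_eqVlt => /orP [/eqP -> //|]; rewrite ltnS => sN.
rewrite /alpha_sum big_nat_recr //= -/(alpha_sum f n N) -/(W_prod f n N) ih //.
have -> : W_prod f n N = 0 by apply: (W_prod_eq0 (s := s)) => //; rewrite s1.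
by rewrite mul0r addr0.
Qed.

Lemma alpha_path_stable f n s : W_path f (n - (s.+1 * d)%:Z) = 0 ->
  alpha_path f n = alpha_sum f n s.+1.
Proof.
move=> W0; rewrite /alpha_path.
suff c : alpha_sum f n @ \oo --> alpha_sum f n s.+1 by rewrite (cvg_limn_inf_sup c).2.
by apply: cvg_near_cst; exists s.+1 => // N /= sN; apply: alpha_sum_stable W0; rewrite sN.
Qed.

Lemma alpha_stops_eventually f n : alpha_stops f n ->
  exists N0, forall N, (N0 <= N)%N -> alpha_path f n = alpha_sum f n N.
Proof.
move=> [s W0]; exists s.+1 => N sN.
by rewrite (alpha_path_stable W0) (alpha_sum_stable (s := s.+1)) // sN.
Qed.

Lemma alpha_sum_cvg f n : alpha_stops f n -> alpha_sum f n @ \oo --> alpha_path f n.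
Proof.
move=> /alpha_stops_eventually [N0 h]; apply: cvg_near_cst.
by exists N0 => // N /= /h.
Qed.

Lemma alpha_path01 f n : alpha_stops f n -> alpha_path f n = 0 \/ alpha_path f n = 1.
Proof. by move=> [s /alpha_path_stable ->]; exact: alpha_sum01. Qed.

Lemma alpha_path_rec f n : alpha_stops f n -> alpha_stops f (n - d%:Z) ->
  alpha_path f n = U_path f (n - d%:Z) + W_path f (n - d%:Z) * alpha_path f (n - d%:Z).
Proof.
move=> /alpha_stops_eventually [N1 h1] /alpha_stops_eventually [N2 h2].
rewrite (h1 (maxn N1 N2).+1) ?leqW ?leq_maxl // alpha_sum_rec.
by rewrite (h2 (maxn N1 N2)) // leq_maxr.
Qed.

Lemma jump_pathE f n : jump_path f n = b_path f n - a_path f n.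
Proof.
rewrite /jump_path /b_path /a_path /ma_path.
have -> : \sum_(1 <= i < q.+1) (phi i - psi i) * f (n - i%:Z) =
    \sum_(1 <= i < q.+1) phi i * f (n - i%:Z) - \sum_(1 <= i < q.+1) psi i * f (n - i%:Z).
  by rewrite -sumrB; apply: eq_bigr => i _; rewrite mulrBl.
lra.
Qed.

Lemma tma_path_rec f n : alpha_stops f n -> alpha_stops f (n - d%:Z) ->
  tma_path f n = if tma_path f (n - d%:Z) <= r then b_path f n else a_path f n.
Proof.
move=> sn snd.
rewrite /tma_path (alpha_path_rec sn snd) !jump_pathE /U_path /W_path /Defs.indic.
case: (alpha_path01 snd) => ->.
  by rewrite !mulr0 !addr0; case: ifP => _ /=; lra.
by rewrite !mulr1 !(addrC (a_path f _)) !subrK; do 2 case: ifP => _; lra.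
Qed.

(* any solution [y] of the threshold recursion satisfies
   [1(y_{n-d} <= r) = alpha_sum f n N + W_prod f n N * 1(y_{n-(N+1)d} <= r)] *)
Lemma tma_path_unique f (y : int -> R) n :
  (forall m, y m = if y (m - d%:Z) <= r then b_path f m else a_path f m) ->
  alpha_stops f n -> y n = tma_path f n.
Proof.
move=> hy [s W0]; pose Z m : R := Defs.indic (y m <= r).
have Zrec m : Z (m - d%:Z) = U_path f (m - d%:Z) + W_path f (m - d%:Z) * Z (m - d%:Z - d%:Z).
  rewrite /Z (hy (m - d%:Z)) /U_path /W_path /Defs.indic.
  by case: (y (m - d%:Z - d%:Z) <= r); case: (a_path f (m - d%:Z) <= r);
    case: (b_path f (m - d%:Z) <= r) => /=; lra.
have Zit N m : Z (m - d%:Z) = alpha_sum f m N + W_prod f m N * Z (m - (N.+1 * d)%:Z).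
  elim: N m => [|N ih] m; first by rewrite /W_prod alpha_sum0 big_geq // mul1r add0r mul1n.
  by rewrite Zrec ih alpha_sum_rec W_prod_rec -lag_succ mulrDr addrA mulrA.
have hZ : Z (n - d%:Z) = alpha_path f n.
  by rewrite (Zit s.+1) (W_prod_eq0 (s := s.+1)) ?leqnn // mul0r addr0 (alpha_path_stable W0).
rewrite hy /tma_path jump_pathE -hZ /Z /Defs.indic.
by case: ifP => _; lra.
Qed.

Lemma ma_path_shiftn k mu coef f n :
  ma_path mu coef (shiftn k f) n = ma_path mu coef f (n + k).
Proof.
rewrite /ma_path /shiftn; congr (_ + _ + _); apply: eq_bigr => i _.
by rewrite addrAC.
Qed.

Lemma W_path_shiftn k f m : W_path (shiftn k f) m = W_path f (m + k).
Proof. by rewrite /W_path /a_path /b_path !ma_path_shiftn. Qed.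

Lemma alpha_sum_shiftn k f n N : alpha_sum (shiftn k f) n N = alpha_sum f (n + k) N.
Proof.
rewrite /alpha_sum; apply: eq_bigr => j _; rewrite /U_path /a_path ma_path_shiftn addrAC.
by congr (_ * _); apply: eq_bigr => s _; rewrite W_path_shiftn addrAC.
Qed.

Lemma tma_path_shiftn k f : tma_path (shiftn k f) = shiftn k (tma_path f).
Proof.
apply/funext => n; rewrite /tma_path /shiftn !jump_pathE /a_path /b_path !ma_path_shiftn.
by rewrite /alpha_path (_ : alpha_sum _ n = alpha_sum f (n + k)) //; apply/funext => N;
  rewrite alpha_sum_shiftn.
Qed.

Lemma tma_path_shift f : tma_path (Defs.shift f) = Defs.shift (tma_path f).
Proof. exact: (tma_path_shiftn 1 f). Qed.

Definition ma_window m : set int := [set i | m - q%:Z <= i <= m].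

Lemma measurable_ma_path I mu coef m : ma_window m `<=` I ->
  measurable_fun setT (fun f : paths_on I => ma_path mu coef f m).
Proof.
move=> wI; have coord i : (i <= q)%N ->
    measurable_fun setT (fun f : paths_on I => f (m - i%:Z) : R).
  by move=> iq; apply: measurable_coord; apply: wI; rewrite /ma_window /=; lia.
apply: measurable_funD; first apply: measurable_funD.
- exact: measurable_cst.
- by have := coord 0%N isT; rewrite subr0.
- have -> : (fun f : paths_on I => \sum_(1 <= i < q.+1) coef i * f (m - i%:Z)) =
      (fun f => \sum_(i < q) coef i.+1 * f (m - i.+1%:Z)).
    by apply/funext => f; rewrite big_add1 big_mkord.
  apply: measurable_sum => i; apply: measurable_funM; first exact: measurable_cst.
  exact: coord (ltn_ord i).
Qed.

Lemma measurable_W_path I m : ma_window m `<=` I ->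
  measurable_fun setT (fun f : paths_on I => W_path f m).
Proof.
by move=> wI; apply: measurable_funB; apply: measurable_indic_le; exact: measurable_ma_path.
Qed.

Lemma measurable_alpha_sum n N : measurable_fun setT (fun f : paths_on setT => alpha_sum f n N).
Proof.
apply: measurable_sum => j; apply: measurable_funM.
  by apply: measurable_prod => s _; exact: measurable_W_path.
by apply: measurable_indic_le; exact: measurable_ma_path.
Qed.

Lemma measurable_alpha_path n : measurable_fun setT (fun f : paths_on setT => alpha_path f n).
Proof.
apply: measurable_fun_limn_sup => [f _|f _|N]; last exact: measurable_alpha_sum.
- by exists 1 => _ [N _ <-]; move: (alpha_sum01 f n N); rewrite /alpha_sum => -[->|->]; lra.
- by exists 0 => _ [N _ <-]; move: (alpha_sum01 f n N); rewrite /alpha_sum => -[->|->]; lra.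
Qed.

Lemma measurable_tma_path_at n : measurable_fun setT (fun f : paths_on setT => tma_path f n).
Proof.
apply: measurable_funD; first exact: measurable_ma_path.
apply: measurable_funM; last exact: measurable_alpha_path.
rewrite (_ : (fun f : paths_on setT => jump_path f n) = fun f => b_path f n - a_path f n).
  by apply: measurable_funB; exact: measurable_ma_path.
by apply/funext => f; rewrite jump_pathE.
Qed.

Lemma measurable_tma_path : measurable_fun setT (tma_path : paths_on setT -> paths_on setT).
Proof. by apply: measurable_to_paths_on => n _; exact: measurable_tma_path_at. Qed.
End tma_path.

Lemma ae_forall_countable d (T : measurableType d) (R : realType)
    (mu : {measure set T -> \bar R}) (I : countType) (Q : I -> T -> Prop) :
  (forall i, {ae mu, forall w, Q i w}) -> {ae mu, forall w, forall i, Q i w}.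
Proof.
move=> hQ; have : {ae mu, forall w, forall n i, unpickle n = Some i -> Q i w}.
  apply: ae_foralln => n; case: (unpickle n) => [i|]; last exact: nearW.
  by apply: filterS (hQ i) => w Qw _ [<-].
by apply: filterS => w Qw i; apply: (Qw (pickle i)); rewrite pickleK.
Qed.

Section tma_iid.
Context {dT : measure_display} {T : measurableType dT} {R : realType}.
Variables (P : probability T R) (e : int -> T -> R).
Variables (q d : nat) (r mu1 mu2 : R) (phi psi : nat -> R).
Hypothesis e_iid : iid P e.
Hypothesis d_gt0 : (0 < d)%N.
Local Notation X := (Defs.path e).
Local Notation a_path := (a_path q mu2 psi).
Local Notation b_path := (b_path q mu1 phi).
Local Notation W_path := (W_path q r mu1 mu2 phi psi).
Local Notation alpha_stops := (alpha_stops q d r mu1 mu2 phi psi).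
Local Notation alpha_sum := (alpha_sum q d r mu1 mu2 phi psi).
Local Notation alpha_path := (alpha_path q d r mu1 mu2 phi psi).
Local Notation tma_path := (tma_path q d r mu1 mu2 phi psi).

Hypothesis regimes_agree :
  P [set w | a_path (X w) 0 <= r /\ b_path (X w) 0 <= r] +
  P [set w | r < a_path (X w) 0 /\ r < b_path (X w) 0] <> 0%E.

Let E m : set (int -> R) := [set f | W_path f m <> 0].

Let events_on_E m : events_on (ma_window q m) (E m).
Proof.
have := @measurable_W_path R q r mu1 mu2 phi psi (ma_window q m) m (fun i h => h)
  measurableT _ (measurableC (measurable_set1 0)).
by rewrite setTI.
Qed.

Let path_measurable_E m : path_measurable (E m).
Proof. by apply: events_on_path_measurable; exact: events_on_E. Qed.

Let prob_E m : P (X @^-1` E m) = P (X @^-1` E 0).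
Proof.
have -> : E m = shiftn m @^-1` E 0.
  by apply/seteqP; split => f; rewrite /E /= W_path_shiftn add0r.
by rewrite (prob_shiftn e_iid).
Qed.

Let p := fine (P (X @^-1` E 0)).

Let pE : P (X @^-1` E 0) = p%:E.
Proof. by rewrite fineK // fin_num_measure //; exact: (path_measurable_preimage e_iid). Qed.

Let p_lt1 : p < 1.
Proof.
have mma mu coef : measurable_fun setT (fun w => ma_path q mu coef (X w) 0).
  exact: (measurable_comp_path e_iid (@measurable_ma_path R q setT mu coef 0 (fun _ _ => I))).
have mle (g : T -> R) : measurable_fun setT g -> measurable [set w | g w <= r].
  move=> mg; have := mg measurableT _ (measurable_itv `]-oo, r]); rewrite setTI.
  by congr measurable; apply/seteqP; split => w; rewrite /= in_itv.
have mgt (g : T -> R) : measurable_fun setT g -> measurable [set w | r < g w].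
  move=> mg; have := mg measurableT _ (measurable_itv `]r, +oo[); rewrite setTI.
  by congr measurable; apply/seteqP; split => w; rewrite /= in_itv andbT.
have regimesE : X @^-1` (~` E 0) =
    [set w | a_path (X w) 0 <= r /\ b_path (X w) 0 <= r] `|`
    [set w | r < a_path (X w) 0 /\ r < b_path (X w) 0].
  apply/seteqP; split => w; rewrite /E /W_path /Defs.indic /= !ltNge;
    case: (a_path (X w) 0 <= r); case: (b_path (X w) 0 <= r) => /=; try tauto;
    try (by move=> ?; lra); by move=> [[]|[]].
have : P (X @^-1` (~` E 0)) <> 0%E.
  rewrite regimesE measureU //.
  - exact: (measurableI _ _ (mle _ (mma mu2 psi)) (mle _ (mma mu1 phi))).
  - exact: (measurableI _ _ (mgt _ (mma mu2 psi)) (mgt _ (mma mu1 phi))).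
  by apply/seteqP; split => w //= [[ha hb] [ha' hb']]; move: ha; rewrite leNgt ha'.
have mE0 := path_measurable_preimage e_iid (path_measurable_E 0).
have -> : P (X @^-1` (~` E 0)) = (1 - p)%:E by rewrite EFinB -pE -probability_setC.
have := probability_le1 P mE0; rewrite pE lee_fin => p1.
by move/eqP; rewrite eqe subr_eq0 => /eqP p1'; lra.
Qed.

(* lags [j (q+1) d] are spaced so that the windows of the [W]'s never overlap *)
Let W_run n (M : nat) : set (int -> R) :=
  [set f | forall j, (1 <= j <= M)%N -> W_path f (n - (j * q.+1 * d)%:Z) <> 0].

Let W_run_window n M := [set i : int | n - (M * q.+1 * d)%:Z - q%:Z <= i].

Let prob_W_run n M :
  events_on (W_run_window n M) (W_run n M) /\ P (X @^-1` W_run n M) = (p ^+ M)%:E.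
Proof.
elim: M => [|M [hrun prun]].
  have -> : W_run n 0 = setT by apply/seteqP; split => f // _ [|j].
  by split; [exact: (@measurableT _ (paths_on _))|rewrite preimage_setT probability_setT].
pose m := n - (M.+1 * q.+1 * d)%:Z.
have runS : W_run n M.+1 = W_run n M `&` E m.
  apply/seteqP; split => f.
  - move=> h; split; last by apply: h; rewrite /= ltnS leqnn.
    by move=> j /andP [j1 jM]; apply: h; rewrite j1 /= leqW.
  - move=> [h1 h2] j /andP [j1]; rewrite leq_eqVlt => /orP [/eqP -> //| jM].
    by apply: h1; rewrite j1 -ltnS jM.
have dq : (q.+1 <= q.+1 * d)%N by rewrite leq_pmulr.
have dM : (M.+1 * q.+1 * d = M * q.+1 * d + q.+1 * d)%N by rewrite mulSnr mulnDl.
have past_sub : W_run_window n M `<=` W_run_window n M.+1.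
  by rewrite /W_run_window => i /=; rewrite dM; lia.
have window_sub : ma_window q m `<=` W_run_window n M.+1.
  by rewrite /W_run_window /ma_window /m => i /= /andP [].
have disj i : W_run_window n M i -> ~ ma_window q m i.
  by rewrite /W_run_window /ma_window /m => /=; rewrite dM; lia.
rewrite runS; split.
  by apply: (@measurableI _ (paths_on _));
    [exact: events_on_sub past_sub _ hrun|exact: events_on_sub window_sub _ (@events_on_E m)].
by rewrite (prob_indep e_iid disj hrun (@events_on_E m)) prun prob_E pE -EFinM exprSr.
Qed.

Let path_measurable_never_stops n : path_measurable [set f | ~ alpha_stops f n].
Proof.
rewrite path_measurableE.
have -> : [set f | ~ alpha_stops f n] = \bigcap_s [set f | W_path f (n - (s.+1 * d)%:Z) <> 0].
  by apply/seteqP; split => f h; [move=> s _ W0; apply: h; exists s|move=> [s]; exact: h].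
apply: (@bigcapT_measurable _ (paths_on setT)) => s.
exact: events_on_sub (fun _ _ => I) _ (@events_on_E _).
Qed.

Lemma prob_alpha_never_stops n : P (X @^-1` [set f | ~ alpha_stops f n]) = 0%E.
Proof.
have mnever := path_measurable_preimage e_iid (path_measurable_never_stops n).
have never_sub M : [set f | ~ alpha_stops f n] `<=` W_run n M.
  move=> f never j /andP [j1 _] W0; apply: never; exists (j * q.+1).-1.
  by rewrite prednK // muln_gt0 j1.
have never_le M : (P (X @^-1` [set f | ~ alpha_stops f n]) <= (p ^+ M)%:E)%E.
  have [hrun <-] := prob_W_run n M; apply: le_measure; rewrite ?inE.
  - exact: mnever.
  - exact: (measurable_path_preimage e_iid hrun).
  - by move=> w; exact: never_sub.
have cvg_p : p ^+ M @[M --> \oo] --> 0 by apply: cvg_expr; rewrite ger0_norm ?p_lt1 ?fine_ge0.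
apply/eqP; rewrite eq_le measure_ge0 andbT -[P _]fineK ?fin_num_measure // lee_fin.
rewrite -(cvg_lim (@Rhausdorff R) cvg_p); apply: limr_ge; first by apply/cvg_ex; exists 0.
by apply: nearW => M; rewrite -lee_fin fineK ?fin_num_measure.
Qed.

Lemma ae_alpha_stops : {ae P, forall w n, alpha_stops (X w) n}.
Proof.
apply: ae_forall_countable => n; exists (X @^-1` [set f | ~ alpha_stops f n]).
split; [|exact: prob_alpha_never_stops|by move=> w /= h; apply: h].
exact: (path_measurable_preimage e_iid (path_measurable_never_stops n)).
Qed.

Lemma alpha_sum_cvg_L1_ae n :
  measurable_fun setT (fun w => alpha_path (X w) n) /\
  P.-integrable setT (EFin \o (fun w => alpha_path (X w) n)) /\
  (\int[P]_(w in setT) (`|alpha_sum (X w) n N - alpha_path (X w) n|)%:E)%E @[N --> \oo]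
    --> 0%E /\
  {ae P, forall w, alpha_sum (X w) n @ \oo --> alpha_path (X w) n}.
Proof.
have malpha : measurable_fun setT (fun w => alpha_path (X w) n).
  exact: (measurable_comp_path e_iid (measurable_alpha_path _ _ _ _ _ _ _ n)).
have msum N : measurable_fun setT (fun w => (alpha_sum (X w) n N)%:E).
  apply/measurable_EFinP.
  exact: (measurable_comp_path e_iid (measurable_alpha_sum _ _ _ _ _ _ _ n N)).
have cvg_ae : {ae P, forall w, alpha_sum (X w) n @ \oo --> alpha_path (X w) n}.
  by apply: filterS ae_alpha_stops => w stops; exact: alpha_sum_cvg.
have cvg_ae' : {ae P, forall w, setT w ->
    (alpha_sum (X w) n N)%:E @[N --> \oo] --> (EFin \o (fun w => alpha_path (X w) n)) w}.
  by apply: filterS cvg_ae => w cvgw _; apply/fine_cvgP; split; [exact: nearW|].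
have bound1 : {ae P, forall w N, setT w -> (`|(alpha_sum (X w) n N)%:E| <= (EFin \o cst 1%R) w)%E}.
  apply: nearW => w N _; rewrite abse_EFin lee_fin /=.
  by case: (alpha_sum01 q d r mu1 mu2 phi psi (X w) n N) => ->; rewrite ?normr0 ?normr1.
have malphaE : measurable_fun setT (EFin \o (fun w => alpha_path (X w) n)).
  exact/measurable_EFinP.
have [int1 L1 _] := dominated_convergence measurableT msum malphaE cvg_ae'
  (finite_measure_integrable_cst P 1 measurableT) bound1.
by split.
Qed.

Lemma measurable_tma n : measurable_fun setT (fun w => tma_path (X w) n).
Proof. exact: (measurable_comp_path e_iid (measurable_tma_path_at _ _ _ _ _ _ _ n)). Qed.

Lemma tma_solution : TMA_solution P (ma_part mu2 psi q e) (ma_part mu1 phi q e) r d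
  (fun n w => tma_path (X w) n).
Proof.
move=> n; apply: filterS ae_alpha_stops => w stops.
exact: (tma_path_rec (stops n) (stops (n - d%:Z))).
Qed.

Lemma tma_solution_unique (y : int -> T -> R) :
  TMA_solution P (ma_part mu2 psi q e) (ma_part mu1 phi q e) r d y ->
  forall n, {ae P, forall w, y n w = tma_path (X w) n}.
Proof.
move=> hy n; apply: filterS2 (ae_forall_countable hy) ae_alpha_stops => w yw stops.
exact: (tma_path_unique (fun m => yw m) (stops n)).
Qed.

Let path_tma : Defs.path (fun n w => tma_path (X w) n) = tma_path \o X.
Proof. by []. Qed.

Let path_measurable_tma A : path_measurable A -> path_measurable (tma_path @^-1` A).
Proof.
rewrite !path_measurableE => hA.
by have := measurable_tma_path q d r mu1 mu2 phi psi measurableT hA; rewrite setTI.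
Qed.

Let tma_preimage_shift A :
  tma_path @^-1` (Defs.shift @^-1` A) = Defs.shift @^-1` (tma_path @^-1` A).
Proof. by apply/seteqP; split => f /=; rewrite tma_path_shift. Qed.

Lemma tma_stationary : strictly_stationary P (fun n w => tma_path (X w) n).
Proof.
move=> A hA; rewrite path_tma !comp_preimage tma_preimage_shift.
exact: (prob_shiftn e_iid 1 (path_measurable_tma hA)).
Qed.

Lemma tma_ergodic : ergodic P (fun n w => tma_path (X w) n).
Proof.
move=> A hA shA; rewrite path_tma comp_preimage.
apply: (shift_invariant_prob01 e_iid (path_measurable_tma hA)).
by rewrite -tma_preimage_shift shA.
Qed.
End tma_iid.

Theorem theorem2p1 (dT : measure_display) (T : measurableType dT)
  (R : realType) (P : probability T R) (e : int -> T -> R)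
  (q d : nat) (r mu1 mu2 : R) (phi psi : nat -> R) :
  iid P e -> (0 < q)%N -> (0 < d)%N ->
  let a := ma_part mu2 psi q e in
  let b := ma_part mu1 phi q e in
  (forall n : int,
     (P [set w | (a n w <= r)%R /\ (b n w <= r)%R] +
      P [set w | (r < a n w)%R /\ (r < b n w)%R])%E <> 0%E) ->
  exists alpha : int -> T -> R,
    (* alpha n stands for alpha_{n-d} *)
    (forall n : int,
       measurable_fun setT (alpha n) /\
       P.-integrable setT (EFin \o alpha n) /\
       ((fun N : nat => (\int[P]_(w in setT)
            (`| alpha_partial a b r d n N w - alpha n w |)%:E)%E) @ \oo
          --> 0%E) /\
       {ae P, forall w,
          (fun N : nat => alpha_partial a b r d n N w) @ \oo --> alpha n w}) /\
    let y : int -> T -> R := fun n w =>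
      a n w + ((mu1 - mu2) + \sum_(1 <= i < q.+1)
                 (phi i - psi i) * e (n - i%:Z) w) * alpha n w in
    (forall n : int, measurable_fun setT (y n)) /\
    TMA_solution P a b r d y /\
    strictly_stationary P y /\
    ergodic P y /\
    (forall yt : int -> T -> R,
       (forall n : int, measurable_fun setT (yt n)) ->
       TMA_solution P a b r d yt ->
       forall n : int, {ae P, forall w, yt n w = y n w}).
Proof.
move=> e_iid _ d_gt0 a b regimes.
exists (fun n w => alpha_path q d r mu1 mu2 phi psi (Defs.path e w) n); split.
  by move=> n; exact: (alpha_sum_cvg_L1_ae e_iid d_gt0 (regimes 0) n).
move=> y; split; first exact: (measurable_tma q d r mu1 mu2 phi psi e_iid).
split; first exact: (tma_solution e_iid d_gt0 (regimes 0)).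
split; first exact: (tma_stationary q d r mu1 mu2 phi psi e_iid).
split; first exact: (tma_ergodic q d r mu1 mu2 phi psi e_iid).
by move=> yt _; exact: (tma_solution_unique e_iid d_gt0 (regimes 0)).
Qed.
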